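(* Let $f\colon X\to Y$ be a perfect map between metrizable spaces, $d$ a compatible metric on $X$, and $(M,\varrho)$ a complete metric space. For every closed $H\subset Y$ and all $m,n\ge1$, the set $\mathcal{K}(m,n,H)$ is open in $C(X,M)$ with respect to the source limitation topology.
   Context: For $A\subset X$, $\delta>0$, $B(A,\delta)=\{x\in X:d(x,A)<\delta\}$. $C(x,g|f^{-1}(y))$ is the component of $g^{-1}(g(x))\cap f^{-1}(y)$ containing $x$. $\mathcal{K}(m,n,y)$ is the set of $g\in C(X,M)$ such that for every subcontinuum $L\subset f^{-1}(y)$ with $\operatorname{diam}g(L)\ge1/n$ there is $x\in L$ with $C(x,g|f^{-1}(y))\subset B(L,1/m)$; $\mathcal{K}(m,n,H)=\bigcap_{y\in H}\mathcal{K}(m,n,y)$. The source limitation topology on $C(X,M)$ has base at $g$ the sets $\{g':\varrho(g'(x),g(x))<\varepsilon(x)\ \forall x\}$ with $\varepsilon\colon X\to(0,1]$ continuous. *)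

From Stdlib Require Import Reals List.
Open Scope R_scope.

Record MetricSpace : Type := {
  carrier :> Type;
  dist : carrier -> carrier -> R;
  dist_nonneg : forall x y, 0 <= dist x y;
  dist_sym : forall x y, dist x y = dist y x;
  dist_eq0 : forall x y, dist x y = 0 <-> x = y;
  dist_tri : forall x y z, dist x z <= dist x y + dist y z
}.

Arguments dist {m} _ _.

Definition Rdist (a b : R) : R := Rabs (a - b).

Section Topo.
Variable X : MetricSpace.

Definition is_open (U : X -> Prop) : Prop :=
  forall x, U x -> exists r, 0 < r /\ forall z, dist x z < r -> U z.

Definition is_closed (F : X -> Prop) : Prop := is_open (fun x => ~ F x).

Definition is_compact (K : X -> Prop) : Prop :=
  forall (I : Type) (U : I -> X -> Prop),
    (forall i, is_open (U i)) ->
    (forall x, K x -> exists i, U i x) ->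
    exists l : list I, forall x, K x -> exists i, In i l /\ U i x.

Definition is_connected (A : X -> Prop) : Prop :=
  ~ exists U V : X -> Prop,
      is_open U /\ is_open V /\
      (forall x, A x -> U x \/ V x) /\
      (exists x, A x /\ U x) /\ (exists x, A x /\ V x) /\
      (forall x, A x -> U x -> V x -> False).

Definition is_continuum (L : X -> Prop) : Prop :=
  (exists x, L x) /\ is_compact L /\ is_connected L.

Definition diam_ge (A : X -> Prop) (r : R) : Prop :=
  forall s, s < r -> exists a b, A a /\ A b /\ s < dist a b.

(* B(A, delta) = { x | d(x, A) < delta }, d(x,A) = inf_{a in A} d(x,a) *)
Definition nbhd (A : X -> Prop) (delta : R) : X -> Prop :=
  fun x => exists a, A a /\ dist x a < delta.

Definition component (S : X -> Prop) (x : X) : X -> Prop :=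
  fun z => exists C : X -> Prop,
    is_connected C /\ (forall w, C w -> S w) /\ C x /\ C z.

Definition complete : Prop :=
  forall u : nat -> X,
    (forall eps, 0 < eps -> exists N, forall p q, (N <= p)%nat -> (N <= q)%nat ->
       dist (u p) (u q) < eps) ->
    exists l, forall eps, 0 < eps -> exists N, forall p, (N <= p)%nat ->
       dist (u p) l < eps.
End Topo.

Arguments is_open {X} _.
Arguments is_closed {X} _.
Arguments is_compact {X} _.
Arguments is_connected {X} _.
Arguments is_continuum {X} _.
Arguments diam_ge {X} _ _.
Arguments nbhd {X} _ _.
Arguments component {X} _ _.
Arguments complete X : clear implicits.

Definition continuous {X Y : MetricSpace} (f : X -> Y) : Prop :=
  forall x eps, 0 < eps -> exists delta, 0 < delta /\
    forall z, dist x z < delta -> dist (f x) (f z) < eps.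

Definition continuous_R {X : MetricSpace} (e : X -> R) : Prop :=
  forall x eps, 0 < eps -> exists delta, 0 < delta /\
    forall z, dist x z < delta -> Rdist (e x) (e z) < eps.

Definition image {X Y : MetricSpace} (f : X -> Y) (A : X -> Prop) : Y -> Prop :=
  fun y => exists x, A x /\ f x = y.

Definition perfect {X Y : MetricSpace} (f : X -> Y) : Prop :=
  continuous f /\
  (forall F : X -> Prop, is_closed F -> is_closed (image f F)) /\
  (forall y : Y, is_compact (fun x => f x = y)).

Definition Ccomp {X Y M : MetricSpace} (f : X -> Y) (g : X -> M) (y : Y) (x : X)
  : X -> Prop :=
  component (fun z => g z = g x /\ f z = y) x.

Definition Kset {X Y M : MetricSpace} (f : X -> Y) (m n : nat) (y : Y)
  (g : X -> M) : Prop :=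
  forall L : X -> Prop,
    is_continuum L -> (forall x, L x -> f x = y) ->
    diam_ge (image g L) (1 / INR n) ->
    exists x, L x /\ forall z, Ccomp f g y x z -> nbhd L (1 / INR m) z.

Definition KsetH {X Y M : MetricSpace} (f : X -> Y) (m n : nat) (H : Y -> Prop)
  (g : X -> M) : Prop :=
  forall y, H y -> Kset f m n y g.

(* A subset of C(X,M) (given as a predicate on maps, only its values on
   continuous maps matter) is open in the source limitation topology. *)
Definition sl_open {X M : MetricSpace} (P : (X -> M) -> Prop) : Prop :=
  forall g : X -> M, continuous g -> P g ->
    exists eps : X -> R,
      continuous_R eps /\ (forall x, 0 < eps x <= 1) /\
      forall g' : X -> M, continuous g' ->
        (forall x, dist (g' x) (g x) < eps x) -> P g'.

From Stdlib Require Import Reals Lra Lia List Classical ClassicalEpsilon.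
From Stdlib Require Cantor.
Open Scope R_scope.

(* The heart of the proof is local stability ([kset_locally_stable]): if
   g ∈ K(m,n,y0), then for some δ > 0 every g' that is δ-close to g on the fibre
   over a point y' with d(y0,y') < δ lies in K(m,n,y').  Otherwise there are
   bad data (y_k, g_k, L_k) with y_k → y0 and g_k → g.  Along a diagonal
   subsequence the upper and lower limits of the L_k agree on f^{-1}(y0), so
   L = limsup L_k is a continuum in f^{-1}(y0) with diam g(L) ≥ 1/n (fibres of
   the perfect map f are compact).  For the point x ∈ L supplied by
   g ∈ K(m,n,y0), the upper limit of the bad components C(x_k, g_k|f^{-1}(y_k))
   is a connected subset of C(x, g|f^{-1}(y0)) leaving B(L,1/m): contradiction.
   Finally, the supremum of the admissible radii about y is a positive
   1-Lipschitz function of y; half of it, composed with f, is the required ε. *)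

Definition inv_succ (k : nat) : R := / (INR k + 1).

Lemma inv_succ_pos k : 0 < inv_succ k.
Proof. unfold inv_succ. apply Rinv_0_lt_compat. pose proof (pos_INR k). lra. Qed.

Lemma inv_succ_antitone j k : (j <= k)%nat -> inv_succ k <= inv_succ j.
Proof.
  intros Hjk. unfold inv_succ. apply Rinv_le_contravar.
  - pose proof (pos_INR j). lra.
  - apply le_INR in Hjk. lra.
Qed.

Lemma inv_succ_small eps : 0 < eps -> exists N, forall k, (N <= k)%nat -> inv_succ k < eps.
Proof.
  intros Heps. destruct (archimed_cor1 eps Heps) as [N [HN HN0]].
  exists N. intros k Hk. eapply Rle_lt_trans; [|exact HN].
  unfold inv_succ. apply Rinv_le_contravar.
  - apply lt_0_INR. lia.
  - apply le_INR in Hk. lra.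
Qed.

Lemma dist_self (X : MetricSpace) (x : X) : dist x x = 0.
Proof. apply dist_eq0. reflexivity. Qed.

Lemma ball_open (X : MetricSpace) (c : X) r : is_open (fun z => dist c z < r).
Proof.
  intros x Hx. exists (r - dist c x). split; [lra|].
  intros z Hz. pose proof (dist_tri X c x z). lra.
Qed.

Lemma list_bound (I : Type) (N : I -> nat) (l : list I) :
  exists B, forall i, In i l -> (N i <= B)%nat.
Proof.
  induction l as [|a l [B HB]].
  - exists 0%nat. intros i [].
  - exists (Nat.max (N a) B). intros i [<-|Hi]; [lia|]. specialize (HB i Hi). lia.
Qed.

Definition cluster {X : MetricSpace} (u : nat -> X) (c : X) : Prop :=
  forall eps, 0 < eps -> forall N, exists j, (N <= j)%nat /\ dist (u j) c < eps.

Lemma cluster_subsequence (X : MetricSpace) (u : nat -> X) (c : X) :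
  cluster u c -> exists s : nat -> nat, forall j, (j <= s j)%nat /\ dist (u (s j)) c < inv_succ j.
Proof.
  intros Hc. apply (choice (fun j k => (j <= k)%nat /\ dist (u k) c < inv_succ j)).
  intros j. apply Hc, inv_succ_pos.
Qed.

Lemma closed_subset_compact (X : MetricSpace) (K F : X -> Prop) (hK : is_compact K)
  (hFK : forall x, F x -> K x)
  (hF : forall x, (forall eps, 0 < eps -> exists w, F w /\ dist x w < eps) -> F x) :
  is_compact F.
Proof.
  intros I U hU hcov.
  set (V := fun o : option I => match o with Some i => U i | None => fun x => ~ F x end).
  assert (V_open : forall o, is_open (V o)).
  { intros [i|]; [apply hU|]. intros x Hx.
    assert (Hgap : exists eps, 0 < eps /\ forall w, F w -> eps <= dist x w).
    { apply NNPP. intros C. apply Hx, hF. intros eps He. apply NNPP. intros C2.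
      apply C. exists eps. split; [exact He|]. intros w Fw. apply Rnot_lt_le. eauto. }
    destruct Hgap as [eps [He Hw]]. exists eps. split; [exact He|].
    intros z Hz Fz. specialize (Hw z Fz). lra. }
  destruct (hK _ V V_open) as [l Hl].
  { intros x Hx. destruct (classic (F x)) as [Fx|Fx].
    - destruct (hcov x Fx) as [i Hi]. now exists (Some i).
    - now exists None. }
  exists (flat_map (fun o => match o with Some i => i :: nil | None => nil end) l).
  intros x Fx. destruct (Hl x (hFK x Fx)) as [[i|] [Hin Hi]]; [|contradiction].
  exists i. split; [|exact Hi]. apply in_flat_map. exists (Some i). simpl. auto.
Qed.

Section PerfectFibre.
Variables (X Y : MetricSpace) (f : X -> Y).
Hypothesis hf : perfect f.
Variable y0 : Y.

(* The closedness of [f] is what makes this work. *)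
Lemma fibre_cluster (u : nat -> X) (hu : forall j, dist (f (u j)) y0 < inv_succ j) :
  exists c, f c = y0 /\ cluster u c.
Proof.
  destruct hf as [_ [f_closed f_compact]].
  apply NNPP. intros no_cluster.
  assert (avoid : forall c : {c : X | f c = y0}, exists p : R * nat, 0 < fst p /\
     forall j, (snd p <= j)%nat -> fst p <= dist (u j) (proj1_sig c)).
  { intros [c Hc]. simpl. apply NNPP. intros H1. apply no_cluster. exists c. split; [exact Hc|].
    intros eps He N. apply NNPP. intros H2. apply H1. exists (eps, N). simpl. split; [exact He|].
    intros j Hj. apply Rnot_lt_le. intros H3. apply H2. exists j. auto. }
  destruct (choice _ avoid) as [ep Hep].
  destruct (f_compact y0 _ (fun c z => dist (proj1_sig c) z < fst (ep c))) as [l Hl].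
  { intros c. apply ball_open. }
  { intros x Hx. exists (exist _ x Hx). simpl. rewrite dist_self. apply Hep. }
  destruct (list_bound _ (fun c => snd (ep c)) l) as [B HB].
  set (F := fun x => forall eps, 0 < eps -> exists j, (B <= j)%nat /\ dist x (u j) < eps).
  assert (F_closed : is_closed F).
  { intros x Hx. unfold F in Hx.
    apply not_all_ex_not in Hx. destruct Hx as [eps Hx].
    apply imply_to_and in Hx. destruct Hx as [He Hx].
    exists (eps / 2). split; [lra|]. intros z Hz Fz.
    destruct (Fz (eps / 2)) as [j [Hj Hd]]; [lra|]. apply Hx. exists j. split; [exact Hj|].
    pose proof (dist_tri X x z (u j)). lra. }
  assert (Hy0 : image f F y0).
  { apply NNPP. intros Hy. destruct (f_closed F F_closed y0 Hy) as [r [Hr Hball]].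
    destruct (inv_succ_small r Hr) as [N HN].
    apply (Hball (f (u (Nat.max N B)))).
    - rewrite dist_sym. eapply Rlt_trans; [apply hu|]. apply HN. lia.
    - exists (u (Nat.max N B)). split; [|reflexivity].
      intros e He. exists (Nat.max N B). split; [lia|]. rewrite dist_self. exact He. }
  destruct Hy0 as [x [Fx Hfx]].
  destruct (Hl x Hfx) as [c [Hcl Hcx]].
  destruct (Hep c) as [Hp1 Hp2].
  destruct (Fx (fst (ep c) - dist (proj1_sig c) x)) as [j [Hj Hd]]; [lra|].
  specialize (HB c Hcl). simpl in HB.
  assert (fst (ep c) <= dist (u j) (proj1_sig c)) by (apply Hp2; lia).
  pose proof (dist_tri X (proj1_sig c) x (u j)). rewrite dist_sym in H. lra.
Qed.

Lemma fibre_nets : exists net : nat -> list X,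
  forall j x, f x = y0 -> exists c, In c (net j) /\ dist c x < inv_succ j.
Proof.
  apply (choice (fun j l => forall x, f x = y0 -> exists c, In c l /\ dist c x < inv_succ j)).
  intros j. destruct hf as [_ [_ f_compact]].
  destruct (f_compact y0 {c : X | f c = y0} (fun i z => dist (proj1_sig i) z < inv_succ j))
    as [l Hl].
  - intros i. apply ball_open.
  - intros x Hx. exists (exist _ x Hx). simpl. rewrite dist_self. apply inv_succ_pos.
  - exists (map (@proj1_sig _ _) l). intros x Hx. destruct (Hl x Hx) as [i [Hi Hd]].
    exists (proj1_sig i). split; [apply in_map; exact Hi|exact Hd].
Qed.

End PerfectFibre.

Definition limsup {X : MetricSpace} (A : nat -> X -> Prop) (x : X) : Prop :=
  forall eps, 0 < eps -> forall N, exists k, (N <= k)%nat /\ exists a, A k a /\ dist x a < eps.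

Definition liminf {X : MetricSpace} (A : nat -> X -> Prop) (x : X) : Prop :=
  forall eps, 0 < eps -> exists N, forall k, (N <= k)%nat -> exists a, A k a /\ dist x a < eps.

Lemma liminf_limsup (X : MetricSpace) (A : nat -> X -> Prop) x : liminf A x -> limsup A x.
Proof.
  intros H eps He N. destruct (H eps He) as [N0 HN0].
  exists (Nat.max N N0). split; [lia|]. apply HN0. lia.
Qed.

Lemma limsup_closed (X : MetricSpace) (A : nat -> X -> Prop) x :
  (forall eps, 0 < eps -> exists w, limsup A w /\ dist x w < eps) -> limsup A x.
Proof.
  intros H eps He N. destruct (H (eps / 2)) as [w [Hw Hd]]; [lra|].
  destruct (Hw (eps / 2)) with (N := N) as [k [Hk [a [Ha Hda]]]]; [lra|].
  exists k. split; [exact Hk|]. exists a. split; [exact Ha|].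
  pose proof (dist_tri X x w a). lra.
Qed.

Section SetLimits.
Variables (X Y : MetricSpace) (f : X -> Y).
Hypothesis hf : perfect f.
Variables (y0 : Y) (A : nat -> X -> Prop).
Hypothesis hA : forall k a, A k a -> dist (f a) y0 < inv_succ k.

Lemma limsup_fibre x : limsup A x -> f x = y0.
Proof.
  intros Hx. apply dist_eq0. apply Rle_antisym; [|apply dist_nonneg].
  apply Rnot_lt_le. intros Hpos. set (e := dist (f x) y0) in *.
  destruct (proj1 hf x (e / 2)) as [d [Hd Hfd]]; [lra|].
  destruct (inv_succ_small (e / 2)) as [N HN]; [lra|].
  destruct (Hx d Hd N) as [k [Hk [a [Ha Hda]]]].
  specialize (Hfd a Hda). specialize (hA k a Ha). specialize (HN k Hk).
  pose proof (dist_tri Y (f x) (f a) y0). unfold e in *. lra.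
Qed.

Lemma limsup_compact : is_compact (limsup A).
Proof.
  apply closed_subset_compact with (K := fun x => f x = y0).
  - apply hf.
  - exact limsup_fibre.
  - apply limsup_closed.
Qed.

Lemma limsup_cluster (k : nat -> nat) (p : nat -> X)
  (hk : forall N, (N <= k N)%nat) (hp : forall N, A (k N) (p N)) :
  exists c, limsup A c /\ cluster p c.
Proof.
  destruct (fibre_cluster X Y f hf y0 p) as [c [_ Hc]].
  { intros j. eapply Rlt_le_trans; [apply hA, hp|]. apply inv_succ_antitone, hk. }
  exists c. split; [|exact Hc].
  intros eps He N. destruct (Hc eps He N) as [j [Hj Hd]].
  exists (k j). split; [specialize (hk j); lia|].
  exists (p j). split; [apply hp|]. rewrite dist_sym. exact Hd.
Qed.

Lemma limsup_seq_compact (u : nat -> X) (hu : forall j, limsup A (u j)) :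
  exists c, limsup A c /\ cluster u c.
Proof.
  destruct (fibre_cluster X Y f hf y0 u) as [c [_ Hc]].
  { intros j. rewrite (limsup_fibre _ (hu j)), dist_self. apply inv_succ_pos. }
  exists c. split; [|exact Hc].
  apply limsup_closed. intros eps He. destruct (Hc eps He 0%nat) as [j [_ Hd]].
  exists (u j). split; [apply hu|]. rewrite dist_sym. exact Hd.
Qed.

Lemma limsup_split_gap (U V : X -> Prop) (hU : is_open U) (hV : is_open V)
  (hcov : forall x, limsup A x -> U x \/ V x)
  (hdis : forall x, limsup A x -> U x -> V x -> False) :
  exists del, 0 < del /\
    forall p q, limsup A p -> U p -> limsup A q -> V q -> del <= dist p q.
Proof.
  apply NNPP. intros no_gap.
  assert (close : forall j, exists pq : X * X,
    (limsup A (fst pq) /\ U (fst pq)) /\ (limsup A (snd pq) /\ V (snd pq)) /\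
    dist (fst pq) (snd pq) < inv_succ j).
  { intros j. apply NNPP. intros C. apply no_gap. exists (inv_succ j).
    split; [apply inv_succ_pos|]. intros p q H1 H2 H3 H4. apply Rnot_lt_le. intros H5.
    apply C. exists (p, q). simpl. tauto. }
  destruct (choice _ close) as [pq Hpq].
  destruct (limsup_seq_compact (fun j => fst (pq j))) as [c [Hlc Hcl]].
  { intros j. apply Hpq. }
  destruct (hcov c Hlc) as [Uc|Vc].
  - destruct (hU c Uc) as [s [Hs HsU]].
    destruct (inv_succ_small (s / 2)) as [N HN]; [lra|].
    destruct (Hcl (s / 2)) with (N := N) as [j [Hj Hd]]; [lra|].
    destruct (Hpq j) as [_ [[Hq Vq] Hpq_close]]. specialize (HN j Hj).
    apply (hdis (snd (pq j)) Hq); [|exact Vq]. apply HsU.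
    pose proof (dist_tri X c (fst (pq j)) (snd (pq j))).
    pose proof (dist_sym X c (fst (pq j))). lra.
  - destruct (hV c Vc) as [s [Hs HsV]].
    destruct (Hcl s Hs 0%nat) as [j [_ Hd]].
    destruct (Hpq j) as [[Hp Up] _].
    apply (hdis (fst (pq j)) Hp Up). apply HsV. rewrite dist_sym. exact Hd.
Qed.

Lemma limsup_not_split (hcon : forall k, is_connected (A k))
  (U V : X -> Prop) (hU : is_open U) (hV : is_open V) (hUV : forall z, U z -> V z -> False)
  (hcov : forall x, limsup A x -> U x \/ V x)
  (x0 : X) (hx0 : liminf A x0) (hx0U : U x0) (q : X) (hq : limsup A q) (hqV : V q) :
  False.
Proof.
  destruct (hU x0 hx0U) as [r [Hr HrU]].
  destruct (hx0 r Hr) as [N0 HN0].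
  destruct (hV q hqV) as [r' [Hr' HrV]].
  (* infinitely many [A k] meet both [U] and [V], hence leave [U \/ V] *)
  assert (escape : forall N, exists p : nat * X,
    (N <= fst p)%nat /\ A (fst p) (snd p) /\ ~ U (snd p) /\ ~ V (snd p)).
  { intros N. destruct (hq r' Hr' (Nat.max N N0)) as [k [Hk [a [Ha Hda]]]].
    destruct (HN0 k) as [a0 [Ha0 Hda0]]; [lia|].
    apply NNPP. intros C. apply (hcon k). exists U, V.
    split; [exact hU|]. split; [exact hV|].
    split.
    { intros x Hx. apply NNPP. intros C2. apply C. exists (k, x). simpl. split; [lia|].
      split; [exact Hx|]. tauto. }
    split; [exists a0; split; [exact Ha0|apply HrU; exact Hda0]|].
    split; [exists a; split; [exact Ha|apply HrV; exact Hda]|].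
    intros x _ H1 H2. exact (hUV x H1 H2). }
  destruct (choice _ escape) as [p Hp].
  destruct (limsup_cluster (fun N => fst (p N)) (fun N => snd (p N))) as [c [Hlc Hcl]];
    [apply Hp|apply Hp|].
  destruct (hcov c Hlc) as [Uc|Vc].
  - destruct (hU c Uc) as [s [Hs HsU]]. destruct (Hcl s Hs 0%nat) as [j [_ Hd]].
    apply (proj1 (proj2 (proj2 (Hp j)))). apply HsU. rewrite dist_sym. exact Hd.
  - destruct (hV c Vc) as [s [Hs HsV]]. destruct (Hcl s Hs 0%nat) as [j [_ Hd]].
    apply (proj2 (proj2 (proj2 (Hp j)))). apply HsV. rewrite dist_sym. exact Hd.
Qed.

(* The upper limit of connected sets is connected once the lower limit is
   nonempty: a relative splitting is thickened into a genuine one using the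
   positive gap of [limsup_split_gap]. *)
Lemma limsup_connected (hcon : forall k, is_connected (A k)) (x0 : X) (hx0 : liminf A x0) :
  is_connected (limsup A).
Proof.
  intros [U [V [hU [hV [hcov [[p0 [Hp0 Up0]] [[q0 [Hq0 Vq0]] hdis]]]]]]].
  destruct (limsup_split_gap U V hU hV hcov hdis) as [del [Hdel gap]].
  set (U' := fun z => exists p, limsup A p /\ U p /\ dist p z < del / 2).
  set (V' := fun z => exists p, limsup A p /\ V p /\ dist p z < del / 2).
  assert (thick_open : forall W : X -> Prop,
    is_open (fun z => exists p, limsup A p /\ W p /\ dist p z < del / 2)).
  { intros W z [p [H1 [H2 H3]]]. exists (del / 2 - dist p z). split; [lra|].
    intros w Hw. exists p. split; [exact H1|]. split; [exact H2|].
    pose proof (dist_tri X p z w). lra. }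
  assert (dUV : forall z, U' z -> V' z -> False).
  { intros z [p [H1 [H2 H3]]] [q [H4 [H5 H6]]]. specialize (gap p q H1 H2 H4 H5).
    pose proof (dist_tri X p z q). rewrite (dist_sym X z q) in H. lra. }
  assert (cUV : forall x, limsup A x -> U' x \/ V' x).
  { intros x Hx. destruct (hcov x Hx) as [H|H]; [left|right];
      exists x; rewrite dist_self; repeat split; auto; lra. }
  assert (U'p0 : U' p0) by (exists p0; rewrite dist_self; repeat split; auto; lra).
  assert (V'q0 : V' q0) by (exists q0; rewrite dist_self; repeat split; auto; lra).
  destruct (cUV x0 (liminf_limsup X A x0 hx0)) as [U'x0|V'x0].
  - exact (limsup_not_split hcon U' V' (thick_open U) (thick_open V) dUV cUV
             x0 hx0 U'x0 q0 Hq0 V'q0).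
  - apply (limsup_not_split hcon V' U' (thick_open V) (thick_open U) (fun z a b => dUV z b a)
             (fun x h => proj1 (or_comm (U' x) (V' x)) (cUV x h))
             x0 hx0 V'x0 p0 Hp0 U'p0).
Qed.

End SetLimits.

Definition infinitely (Q : nat -> Prop) : Prop := forall N, exists k, (N <= k)%nat /\ Q k.

(* Indices consistent with the first [i] decisions of the diagonal argument:
   the predicate [P i'] is decided "true" iff infinitely many indices consistent
   with the earlier decisions satisfy it. *)
Fixpoint consistent (P : nat -> nat -> Prop) (i : nat) : nat -> Prop :=
  match i with
  | O => fun _ => True
  | S i' => fun k => consistent P i' k
      /\ (infinitely (fun k => consistent P i' k /\ P i' k) -> P i' k)
      /\ (~ infinitely (fun k => consistent P i' k /\ P i' k) -> ~ P i' k)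
  end.

Lemma consistent_infinite P i : infinitely (consistent P i).
Proof.
  induction i as [|i IH].
  - intros N. exists N. simpl. auto.
  - destruct (classic (infinitely (fun k => consistent P i k /\ P i k))) as [Hi|Hi].
    + intros N. destruct (Hi N) as [k [Hk [H1 H2]]]. exists k. simpl.
      repeat split; auto.
    + assert (H0 : exists N0, forall k, (N0 <= k)%nat -> ~ (consistent P i k /\ P i k)).
      { apply NNPP. intros C. apply Hi. intros N. apply NNPP. intros C2. apply C. exists N.
        intros k Hk Hk2. apply C2. exists k. auto. }
      destruct H0 as [N0 HN0].
      intros N. destruct (IH (Nat.max N N0)) as [k [Hk Sk]]. exists k. simpl.
      split; [lia|]. split; [exact Sk|]. split; [intros C; contradiction|].
      intros _ Pk. apply (HN0 k); [lia|]. auto.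
Qed.

Lemma consistent_antitone P i j k : (i <= j)%nat -> consistent P j k -> consistent P i k.
Proof. intros H. induction H; auto. intros Hs. apply IHle. simpl in Hs. tauto. Qed.

Lemma diagonal_subsequence (P : nat -> nat -> Prop) :
  exists s : nat -> nat, (forall j, (j <= s j)%nat) /\
    forall i, (exists N, forall j, (N <= j)%nat -> P i (s j)) \/
              (exists N, forall j, (N <= j)%nat -> ~ P i (s j)).
Proof.
  destruct (choice (fun j k => (j <= k)%nat /\ consistent P j k)) as [s Hs].
  { intros j. apply consistent_infinite. }
  exists s. split; [apply Hs|].
  intros i. destruct (classic (infinitely (fun k => consistent P i k /\ P i k))) as [Hi|Hi];
    [left|right]; exists (S i); intros j Hj;
    pose proof (consistent_antitone P (S i) j (s j) Hj (proj2 (Hs j))) as Hc;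
    simpl in Hc; tauto.
Qed.

(* Along a suitable subsequence, upper and lower limits agree on the fibre over
   [y0]: decide, for every ball of the finite nets of the fibre, whether the sets
   eventually meet it. *)
Lemma fibre_limits_agree (X Y : MetricSpace) (f : X -> Y) (hf : perfect f) (y0 : Y)
  (A0 : nat -> X -> Prop) :
  exists s : nat -> nat, (forall j, (j <= s j)%nat) /\
    forall x, f x = y0 -> limsup (fun k => A0 (s k)) x -> liminf (fun k => A0 (s k)) x.
Proof.
  destruct (fibre_nets X Y f hf y0) as [net hnet].
  (* the set [A0 k] meets the ball of radius [inv_succ j] about the [t]-th point
     of the [j]-th net, where [i] codes [(j, t)] *)
  set (meets_ball := fun i k => let (j, t) := Cantor.of_nat i in
         exists c, nth_error (net j) t = Some c /\ exists a, A0 k a /\ dist a c < inv_succ j).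
  destruct (diagonal_subsequence meets_ball) as [s [Hs1 Hs2]].
  exists s. split; [exact Hs1|].
  intros x hfx hx eps He.
  destruct (inv_succ_small (eps / 2)) as [j Hj]; [lra|]. specialize (Hj j (le_n j)).
  destruct (hnet j x hfx) as [c [Hc Hcx]].
  destruct (In_nth_error _ _ Hc) as [t Ht].
  destruct (Hs2 (Cantor.to_nat (j, t))) as [[N HN]|[N HN]].
  - exists N. intros k Hk. specialize (HN k Hk).
    unfold meets_ball in HN. rewrite Cantor.cancel_of_to in HN.
    destruct HN as [c' [Ht' [a [Ha Hda]]]]. rewrite Ht in Ht'. injection Ht' as <-.
    exists a. split; [exact Ha|]. pose proof (dist_tri X x c a).
    rewrite (dist_sym X x c), (dist_sym X c a) in H. lra.
  - exfalso. destruct (hx (inv_succ j - dist c x)) with (N := N) as [k [Hk [a [Ha Hda]]]];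
      [lra|].
    apply (HN k Hk). unfold meets_ball. rewrite Cantor.cancel_of_to.
    exists c. split; [exact Ht|]. exists a. split; [exact Ha|].
    pose proof (dist_tri X a x c). rewrite (dist_sym X a x), (dist_sym X x c) in H. lra.
Qed.

Lemma best_approximant (X : MetricSpace) (A : X -> Prop) (x : X) (hne : exists a, A a) (k : nat) :
  exists a, A a /\ forall j, (j <= k)%nat ->
    (exists b, A b /\ dist x b < inv_succ j) -> dist x a < inv_succ j.
Proof.
  induction k as [|k IH].
  - destruct (classic (exists b, A b /\ dist x b < inv_succ 0)) as [[b [Hb Hd]]|Hn].
    + exists b. split; [exact Hb|]. intros j Hj _. replace j with 0%nat by lia. exact Hd.
    + destruct hne as [a Ha]. exists a. split; [exact Ha|]. intros j Hj Hx.
      replace j with 0%nat in Hx by lia. contradiction.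
  - destruct (classic (exists b, A b /\ dist x b < inv_succ (S k))) as [[b [Hb Hd]]|Hn].
    + exists b. split; [exact Hb|]. intros j Hj _.
      pose proof (inv_succ_antitone j (S k) Hj). lra.
    + destruct IH as [a [Ha Ha2]]. exists a. split; [exact Ha|]. intros j Hj Hx.
      destruct (Nat.eq_dec j (S k)) as [->|Hne]; [contradiction|]. apply Ha2; [lia|exact Hx].
Qed.

Lemma liminf_approximants (X : MetricSpace) (A : nat -> X -> Prop) (x : X)
  (hx : liminf A x) (hne : forall k, exists a, A k a) :
  exists u : nat -> X, (forall k, A k (u k)) /\
    forall eps, 0 < eps -> exists N, forall k, (N <= k)%nat -> dist x (u k) < eps.
Proof.
  destruct (choice _ (fun k => best_approximant X (A k) x (hne k) k)) as [u Hu].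
  exists u. split; [apply Hu|].
  intros eps He. destruct (inv_succ_small eps He) as [j Hj].
  destruct (hx (inv_succ j) (inv_succ_pos j)) as [N HN]. exists (Nat.max N j). intros k Hk.
  eapply Rlt_trans; [|apply (Hj j); lia]. apply Hu; [lia|]. apply HN. lia.
Qed.

Section LimitsOfMaps.
Variables (X Y M : MetricSpace) (f : X -> Y).
Hypothesis hf : perfect f.
Variables (y0 : Y) (g : X -> M).
Hypothesis gc : continuous g.
Variables (ys : nat -> Y) (G : nat -> X -> M).
Hypothesis hys : forall k, dist (ys k) y0 < inv_succ k.
Hypothesis hG : forall k a, f a = ys k -> dist (G k a) (g a) < inv_succ k.

Lemma over_fibres_shrink (A : nat -> X -> Prop) (hAf : forall k a, A k a -> f a = ys k) :
  forall k a, A k a -> dist (f a) y0 < inv_succ k.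
Proof. intros k a Ha. rewrite (hAf k a Ha). apply hys. Qed.

Lemma limsup_diam (A : nat -> X -> Prop) (hAf : forall k a, A k a -> f a = ys k)
  (r : R) (hd : forall k, diam_ge (image (G k) (A k)) r) :
  diam_ge (image g (limsup A)) r.
Proof.
  pose proof (over_fibres_shrink A hAf) as hA.
  intros s Hs. set (s' := (s + r) / 2).
  assert (far : forall k, exists pq : X * X,
    A k (fst pq) /\ A k (snd pq) /\ s' < dist (G k (fst pq)) (G k (snd pq))).
  { intros k. destruct (hd k s') as [a [b [[p [Hp <-]] [[q [Hq <-]] Hab]]]]; [unfold s'; lra|].
    exists (p, q). auto. }
  destruct (choice _ far) as [pq Hpq].
  destruct (limsup_cluster X Y f hf y0 A hA (fun k => k) (fun k => fst (pq k)))
    as [c [Hc Hcl]]; [auto|apply Hpq|].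
  destruct (cluster_subsequence X _ c Hcl) as [sg Hsg].
  destruct (limsup_cluster X Y f hf y0 A hA sg (fun j => snd (pq (sg j))))
    as [e [He Hel]]; [apply Hsg|intros j; apply Hpq|].
  exists (g c), (g e). split; [exists c; auto|]. split; [exists e; auto|].
  set (eta := (s' - s) / 4).
  assert (Heta : 0 < eta) by (unfold eta, s'; lra).
  destruct (gc c eta Heta) as [dc [Hdc Hdc2]].
  destruct (gc e eta Heta) as [de [Hde Hde2]].
  destruct (inv_succ_small (Rmin dc eta)) as [N1 HN1]; [apply Rmin_pos; lra|].
  destruct (Hel de Hde N1) as [j [Hj Hd]].
  set (k := sg j). destruct (Hsg j) as [Hk Hpk]. fold k in Hk, Hpk.
  destruct (Hpq k) as [Ap [Aq far_k]].
  set (p := fst (pq k)) in *. set (q := snd (pq k)) in *.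
  pose proof (HN1 j Hj) as Hir. pose proof (Rmin_l dc eta). pose proof (Rmin_r dc eta).
  pose proof (inv_succ_antitone j k Hk).
  assert (E1 : dist (G k p) (g p) < eta) by (pose proof (hG k p (hAf k p Ap)); lra).
  assert (E2 : dist (G k q) (g q) < eta) by (pose proof (hG k q (hAf k q Aq)); lra).
  assert (E3 : dist (g c) (g p) < eta) by (apply Hdc2; rewrite dist_sym; lra).
  assert (E4 : dist (g e) (g q) < eta) by (apply Hde2; rewrite dist_sym; exact Hd).
  pose proof (dist_tri M (G k p) (g p) (G k q)).
  pose proof (dist_tri M (g p) (g c) (G k q)).
  pose proof (dist_tri M (g c) (g e) (G k q)).
  pose proof (dist_tri M (g e) (g q) (G k q)).
  rewrite (dist_sym M (g p) (g c)) in *. rewrite (dist_sym M (g q) (G k q)) in *.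
  unfold eta in *. lra.
Qed.

Lemma limsup_level_set (D : nat -> X -> Prop) (u : nat -> X) (x : X)
  (hu : forall k, f (u k) = ys k)
  (hconv : forall eps, 0 < eps -> exists N, forall k, (N <= k)%nat -> dist x (u k) < eps)
  (hD : forall k w, D k w -> G k w = G k (u k) /\ f w = ys k) :
  forall w, limsup D w -> g w = g x.
Proof.
  intros w Hw. apply dist_eq0. apply Rle_antisym; [|apply dist_nonneg].
  apply Rnot_lt_le. intros Hpos.
  set (eta := dist (g w) (g x) / 4).
  assert (Heta : 0 < eta) by (unfold eta; lra).
  destruct (gc w eta Heta) as [dw [Hdw Hdw2]].
  destruct (gc x eta Heta) as [dx [Hdx Hdx2]].
  destruct (inv_succ_small eta Heta) as [N1 HN1].
  destruct (hconv dx Hdx) as [N2 HN2].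
  destruct (Hw dw Hdw (Nat.max N1 N2)) as [k [Hk [a [Ha Hda]]]].
  destruct (hD k a Ha) as [Hga Hfa].
  pose proof (hG k a Hfa) as E1. pose proof (hG k (u k) (hu k)) as E2.
  pose proof (HN1 k ltac:(lia)). pose proof (HN2 k ltac:(lia)).
  pose proof (Hdw2 a Hda) as E3. pose proof (Hdx2 (u k) ltac:(auto)) as E4.
  rewrite Hga in E1.
  pose proof (dist_tri M (g w) (g a) (g x)).
  pose proof (dist_tri M (g a) (G k (u k)) (g x)).
  pose proof (dist_tri M (G k (u k)) (g (u k)) (g x)).
  rewrite (dist_sym M (g a) (G k (u k))) in *. rewrite (dist_sym M (g (u k)) (g x)) in *.
  unfold eta in *. lra.
Qed.

(* If every point [a] of [A k] has a component [C(a, G k | f^{-1}(ys k))]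
   leaving the [r]-neighbourhood of [A k], then for a point [x] of the lower
   limit the component [C(x, g | f^{-1}(y0))] leaves the [r]-neighbourhood of the
   lower limit: the upper limit of the bad components is a connected subset of
   the latter component. *)
Lemma component_escapes (A : nat -> X -> Prop) (hAf : forall k a, A k a -> f a = ys k)
  (hne : forall k, exists a, A k a) (r : R)
  (bad : forall k a, A k a -> exists z, Ccomp f (G k) (ys k) a z /\ ~ nbhd (A k) r z)
  (x : X) (hx : liminf A x) (hfx : f x = y0) :
  exists z, Ccomp f g y0 x z /\ ~ nbhd (liminf A) r z.
Proof.
  destruct (liminf_approximants X A x hx hne) as [u [Hu Hconv]].
  assert (bad_comp : forall k, exists Dz : (X -> Prop) * X, is_connected (fst Dz) /\
    (forall w, fst Dz w -> G k w = G k (u k) /\ f w = ys k) /\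
    fst Dz (u k) /\ fst Dz (snd Dz) /\ ~ nbhd (A k) r (snd Dz)).
  { intros k. destruct (bad k (u k) (Hu k)) as [z [[C [H1 [H2 [H3 H4]]]] Hz]].
    exists (C, z). simpl. auto. }
  destruct (choice _ bad_comp) as [Dz HD].
  set (D := fun k => fst (Dz k)). set (zk := fun k => snd (Dz k)).
  assert (hDf : forall k w, D k w -> f w = ys k) by (intros k w Hw; apply (HD k), Hw).
  pose proof (over_fibres_shrink D hDf) as hDA.
  destruct (limsup_cluster X Y f hf y0 D hDA (fun k => k) zk) as [z [Hz Hzcl]];
    [auto|apply HD|].
  assert (HxD : liminf D x).
  { intros eps He. destruct (Hconv eps He) as [N HN]. exists N. intros k Hk.
    exists (u k). split; [apply HD|apply HN; exact Hk]. }
  exists z. split.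
  - exists (limsup D). split; [|split].
    + exact (limsup_connected X Y f hf y0 D hDA (fun k => proj1 (HD k)) x HxD).
    + intros w Hw. split.
      * exact (limsup_level_set D u x (fun k => hAf k (u k) (Hu k)) Hconv
                 (fun k w Hw => proj1 (proj2 (HD k)) w Hw) w Hw).
      * exact (limsup_fibre X Y f hf y0 D hDA w Hw).
    + split; [apply liminf_limsup; exact HxD|exact Hz].
  - intros [a [Ha Hza]].
    set (eta := r - dist z a).
    destruct (Ha (eta / 2)) as [N1 HN1]; [unfold eta; lra|].
    destruct (Hzcl (eta / 2)) with (N := N1) as [k [Hk Hd]]; [unfold eta; lra|].
    destruct (HN1 k Hk) as [a' [Ha' Hda']].
    apply (proj2 (proj2 (proj2 (proj2 (HD k))))). exists a'. split; [exact Ha'|].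
    change (dist (zk k) a' < r). pose proof (dist_tri X (zk k) z a). pose proof (dist_tri X (zk k) a a').
    unfold eta in *. lra.
Qed.

End LimitsOfMaps.

Section LocalStability.
Variables (X Y M : MetricSpace) (f : X -> Y).
Hypothesis hf : perfect f.
Variables (g : X -> M) (y0 : Y) (m n : nat).
Hypothesis gc : continuous g.
Hypothesis hK : Kset f m n y0 g.

(* No sequence of counterexamples to [Kset] can converge to [g] and [y0]: the
   upper limit of the bad continua (along a subsequence on which upper and lower
   limits agree on the fibre) is a continuum violating [hK]. *)
Lemma no_bad_sequence (ys : nat -> Y) (G : nat -> X -> M) (L : nat -> X -> Prop)
  (hys : forall k, dist y0 (ys k) < inv_succ k)
  (hG : forall k x, f x = ys k -> dist (G k x) (g x) < inv_succ k)
  (hL : forall k, is_continuum (L k)) (hLf : forall k x, L k x -> f x = ys k)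
  (hLd : forall k, diam_ge (image (G k) (L k)) (1 / INR n))
  (bad : forall k x, L k x -> exists z, Ccomp f (G k) (ys k) x z /\ ~ nbhd (L k) (1 / INR m) z) :
  False.
Proof.
  destruct (fibre_limits_agree X Y f hf y0 L) as [s [Hs agree]].
  set (A := fun k => L (s k)).
  assert (hys' : forall k, dist (ys (s k)) y0 < inv_succ k).
  { intros k. rewrite dist_sym. eapply Rlt_le_trans; [apply hys|]. apply inv_succ_antitone, Hs. }
  assert (hG' : forall k x, f x = ys (s k) -> dist (G (s k) x) (g x) < inv_succ k).
  { intros k x Hx. eapply Rlt_le_trans; [apply hG, Hx|]. apply inv_succ_antitone, Hs. }
  assert (hAf : forall k x, A k x -> f x = ys (s k)) by (intros k; apply hLf).
  pose proof (over_fibres_shrink X Y f y0 (fun k => ys (s k)) hys' A hAf) as hA.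
  assert (hne : forall k, exists a, A k a) by (intros k; apply (hL (s k))).
  destruct (choice _ hne) as [a Ha].
  destruct (limsup_cluster X Y f hf y0 A hA (fun k => k) a) as [x0 [Hx0 _]]; [auto|exact Ha|].
  pose proof (limsup_fibre X Y f hf y0 A hA) as in_fibre.
  destruct (hK (limsup A)) as [x [Hx good]].
  - split; [exists x0; exact Hx0|]. split.
    + exact (limsup_compact X Y f hf y0 A hA).
    + apply (limsup_connected X Y f hf y0 A hA (fun k => proj2 (proj2 (hL (s k)))) x0).
      apply agree; [apply in_fibre|]; exact Hx0.
  - exact in_fibre.
  - exact (limsup_diam X Y M f hf y0 g gc (fun k => ys (s k)) (fun k => G (s k)) hys' hG'
             A hAf _ (fun k => hLd (s k))).
  - destruct (component_escapes X Y M f hf y0 g gc (fun k => ys (s k)) (fun k => G (s k))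
                hys' hG' A hAf hne (1 / INR m) (fun k => bad (s k)) x)
      as [z [Hz far]].
    + apply agree; [apply in_fibre|]; exact Hx.
    + apply in_fibre, Hx.
    + destruct (good z Hz) as [b [Hb Hzb]]. apply far. exists b. split; [|exact Hzb].
      apply agree; [apply in_fibre|]; exact Hb.
Qed.

Lemma kset_locally_stable :
  exists del, 0 < del /\ forall y', dist y0 y' < del -> forall g' : X -> M,
    (forall x, f x = y' -> dist (g' x) (g x) < del) -> Kset f m n y' g'.
Proof.
  apply NNPP. intros unstable.
  assert (bad : forall k, exists t : Y * (X -> M) * (X -> Prop),
    let '(y', g', L) := t in
    dist y0 y' < inv_succ k /\ (forall x, f x = y' -> dist (g' x) (g x) < inv_succ k) /\
    is_continuum L /\ (forall x, L x -> f x = y') /\ diam_ge (image g' L) (1 / INR n) /\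
    forall x, L x -> exists z, Ccomp f g' y' x z /\ ~ nbhd L (1 / INR m) z).
  { intros k. apply NNPP. intros C. apply unstable. exists (inv_succ k).
    split; [apply inv_succ_pos|].
    intros y' Hy' g' Hg' L HL HLf HLd. apply NNPP. intros C2. apply C.
    exists (y', g', L). repeat (split; [assumption|]).
    intros x Hx. apply NNPP. intros C3. apply C2.
    exists x. split; [exact Hx|]. intros z Hz. apply NNPP. intros C4. apply C3. eauto. }
  destruct (choice _ bad) as [T HT].
  apply (no_bad_sequence (fun k => fst (fst (T k))) (fun k => snd (fst (T k)))
           (fun k => snd (T k)));
    intros k; specialize (HT k); destruct (T k) as [[y' g'] L]; apply HT.
Qed.

End LocalStability.

Lemma lipschitz_radius (Y : MetricSpace) (P : Y -> R -> Prop)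
  (bounded : forall y r, P y r -> 0 < r <= 1)
  (down : forall y r r', P y r -> 0 < r' <= r -> P y r')
  (shift : forall y y1 r, P y r -> dist y y1 < r -> P y1 (r - dist y y1))
  (nonempty : forall y, exists r, P y r) :
  exists phi : Y -> R, (forall y, 0 < phi y <= 1) /\
    (forall y y1, phi y - dist y y1 <= phi y1) /\
    (forall y r, 0 < r < phi y -> P y r).
Proof.
  assert (sup : forall y, exists p, is_lub (P y) p).
  { intros y. destruct (completeness (P y)) as [p Hp]; [|apply nonempty|exists p; exact Hp].
    exists 1. intros r Hr. apply (bounded y r Hr). }
  destruct (choice _ sup) as [phi Hphi].
  assert (phi_bounds : forall y, 0 < phi y <= 1).
  { intros y. destruct (nonempty y) as [r Hr]. destruct (Hphi y) as [Hub Hleast].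
    pose proof (Hub r Hr). pose proof (bounded y r Hr). split; [lra|].
    apply Hleast. intros r' Hr'. apply (bounded y r' Hr'). }
  assert (below_sup : forall y r, 0 < r < phi y -> P y r).
  { intros y r Hr. apply NNPP. intros C. destruct (Hphi y) as [_ Hleast].
    assert (phi y <= r); [|lra].
    apply Hleast. intros r' Hr'. apply Rnot_lt_le. intros C2. apply C.
    apply (down y r' r Hr'). lra. }
  exists phi. split; [exact phi_bounds|]. split; [|exact below_sup].
  intros y y1. pose proof (phi_bounds y1). pose proof (dist_nonneg Y y y1).
  destruct (Rle_lt_dec (phi y) (dist y y1)) as [Hle|Hlt]; [lra|].
  apply Rnot_lt_le. intros C. set (r := (phi y + phi y1 + dist y y1) / 2).
  assert (Pr : P y r) by (apply below_sup; unfold r; lra).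
  pose proof (proj1 (Hphi y1) _ (shift y y1 r Pr ltac:(unfold r; lra))).
  unfold r in *. lra.
Qed.

Lemma lipschitz_comp_continuous (X Y : MetricSpace) (f : X -> Y) (phi : Y -> R)
  (fc : continuous f) (lip : forall y y1, phi y - dist y y1 <= phi y1) :
  continuous_R (fun x => phi (f x) / 2).
Proof.
  intros x eps He. destruct (fc x eps He) as [d [Hd Hfd]]. exists d. split; [exact Hd|].
  intros z Hz. specialize (Hfd z Hz). unfold Rdist.
  pose proof (lip (f x) (f z)). pose proof (lip (f z) (f x)).
  rewrite dist_sym in H0. apply Rabs_def1; lra.
Qed.

Section AdmissibleRadius.
Variables (X Y M : MetricSpace) (f : X -> Y) (g : X -> M) (m n : nat) (H : Y -> Prop).

Definition admissible (y : Y) (r : R) : Prop :=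
  0 < r <= 1 /\ forall y', H y' -> dist y y' < r -> forall g' : X -> M,
    (forall x, f x = y' -> dist (g' x) (g x) < r) -> Kset f m n y' g'.

Lemma admissible_down y r r' : admissible y r -> 0 < r' <= r -> admissible y r'.
Proof.
  intros [Hr Hadm] Hr'. split; [lra|]. intros y' Hy' Hd g' Hg'. apply (Hadm y' Hy'); [lra|].
  intros x Hx. specialize (Hg' x Hx). lra.
Qed.

Lemma admissible_shift y y1 r :
  admissible y r -> dist y y1 < r -> admissible y1 (r - dist y y1).
Proof.
  intros [Hr Hadm] Hd. pose proof (dist_nonneg Y y y1). split; [lra|].
  intros y' Hy' Hd' g' Hg'. apply (Hadm y' Hy').
  - pose proof (dist_tri Y y y1 y'). lra.
  - intros x Hx. specialize (Hg' x Hx). lra.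
Qed.

(* Near points of [H] admissible radii come from local stability; away from
   the closed set [H] any radius avoiding [H] is admissible. *)
Lemma admissible_exists (hf : perfect f) (gc : continuous g) (hH : is_closed H)
  (hg : KsetH f m n H g) y : exists r, admissible y r.
Proof.
  destruct (classic (H y)) as [Hy|Hy].
  - destruct (kset_locally_stable X Y M f hf g y m n gc (hg y Hy)) as [d [Hd stable]].
    exists (Rmin d 1). pose proof (Rmin_l d 1). pose proof (Rmin_r d 1).
    split; [split; [apply Rmin_pos|]; lra|].
    intros y' _ Hy' g' Hg'. apply stable; [lra|]. intros x Hx. specialize (Hg' x Hx). lra.
  - destruct (hH y Hy) as [r [Hr Hball]].
    exists (Rmin r 1). pose proof (Rmin_l r 1). pose proof (Rmin_r r 1).
    split; [split; [apply Rmin_pos|]; lra|].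
    intros y' Hy' Hd. exfalso. apply (Hball y'); [lra|exact Hy'].
Qed.

End AdmissibleRadius.

(* Proposition 2.4: [K(m,n,H)] is open in the source limitation topology; the
   control function is half the largest admissible radius at [f x]. *)
Theorem proposition2p4 (X Y M : MetricSpace) (f : X -> Y)
  (hf : perfect f) (hM : complete M)
  (H : Y -> Prop) (hH : is_closed H) (m n : nat) (hm : (1 <= m)%nat) (hn : (1 <= n)%nat) :
  sl_open (KsetH (M := M) f m n H).
Proof.
  intros g gc hg.
  destruct (lipschitz_radius Y (admissible X Y M f g m n H)
              (fun y r Hr => proj1 Hr) (admissible_down X Y M f g m n H)
              (admissible_shift X Y M f g m n H)
              (admissible_exists X Y M f g m n H hf gc hH hg))
    as [phi [phi_bounds [phi_lip phi_adm]]].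
  exists (fun x => phi (f x) / 2). split; [|split].
  - exact (lipschitz_comp_continuous X Y f phi (proj1 hf) phi_lip).
  - intros x. pose proof (phi_bounds (f x)). lra.
  - intros g' _ Hg' y Hy. pose proof (phi_bounds y).
    destruct (phi_adm y (3 * phi y / 4)) as [_ Hadm]; [lra|].
    apply (Hadm y Hy); [rewrite dist_self; lra|].
    intros x Hx. specialize (Hg' x). rewrite Hx in Hg'. lra.
Qed.
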